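(* Let $m\ge 1$ and let $a_0,a_1,\dots,a_m$ be nonnegative integers, not all zero, and let $C_0>0$. Consider the problem of maximizing the score $S=\sum_{i=0}^{m} a_i m_i$ over real numbers $m_0,\dots,m_m\ge 0$ subject to the cost constraint $\frac12\sum_{i=0}^{m} a_i\, 2^i\, m_i^2\le C_0$. Then this problem has an optimal solution of the form $m_i=c\,2^{-i}$ for all $i=0,\dots,m$, for some constant $c>0$. That is, the proportional multiplicity assignment is optimal for every received word.
   Context: Setting: a Reed–Solomon code of length $N$ and dimension $K$ over $GF(2^m)$ whose symbols are sent as $m$ bits each over a binary erasure channel. A received symbol in which exactly $i$ bits are erased is said to be of type $i$; it is consistent with $2^i$ candidate symbols. In algebraic soft decoding (ASD), each of the $2^i$ candidates of a type-$i$ symbol receives the same real multiplicity $m_i\ge 0$. If the received word has $a_i$ symbols of type $i$, the score is $S=\sum_i a_i m_i$ and the (large-multiplicity approximation of the) cost is $C=\frac12\sum_i a_i 2^i m_i^2$. *)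

From mathcomp Require Import all_boot all_order all_algebra.
From mathcomp Require Import reals.
Set Implicit Arguments. Unset Strict Implicit. Unset Printing Implicit Defensive.
Import Order.TTheory GRing.Theory Num.Theory.
Local Open Scope ring_scope.

Definition score (R : realType) (m : nat) (a : 'I_m.+1 -> nat) (mu : 'I_m.+1 -> R) : R :=
  \sum_(i < m.+1) (a i)%:R * mu i.

Definition cost (R : realType) (m : nat) (a : 'I_m.+1 -> nat) (mu : 'I_m.+1 -> R) : R :=
  2^-1 * \sum_(i < m.+1) (a i)%:R * 2 ^+ i * mu i ^+ 2.

Definition feasible (R : realType) (m : nat) (a : 'I_m.+1 -> nat) (C0 : R)
  (mu : 'I_m.+1 -> R) : Prop :=
  (forall i, 0 <= mu i) /\ cost a mu <= C0.

(* For every c > 0 and every symbol type i, AM-GM gives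
   c a_i m_i <= 1/2 a_i 2^i m_i^2 + 1/2 a_i c^2 2^-i, with equality exactly
   when m_i = c 2^-i.  Summing over i, c S(m) <= C(m) + C(mu_c) for the
   proportional assignment mu_c = (c 2^-i)_i, with equality at m = mu_c.
   Choosing c so that C(mu_c) = C0, every feasible m has
   c S(m) <= 2 C0 = c S(mu_c). *)

From mathcomp Require Import all_boot all_order all_algebra.
From mathcomp Require Import reals.
From mathcomp Require Import ring lra.

Set Implicit Arguments.
Unset Strict Implicit.
Unset Printing Implicit Defensive.
Import Order.TTheory GRing.Theory Num.Theory.
Local Open Scope ring_scope.

Lemma AMGM_weighted (F : realFieldType) (x y p : F) :
  0 < p -> 2 * (x * y) <= p * x ^+ 2 + y ^+ 2 / p.
Proof.
move=> p_gt0; rewrite -subr_ge0.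
have -> : p * x ^+ 2 + y ^+ 2 / p - 2 * (x * y) = (p * x - y) ^+ 2 / p.
  by field; rewrite gt_eqF.
by rewrite divr_ge0 ?sqr_ge0 ?ltW.
Qed.

Section ProportionalAssignment.

Variables (R : realType) (m : nat) (a : 'I_m.+1 -> nat).

Definition proportional (c : R) (i : 'I_m.+1) : R := c / 2 ^+ i.

Definition weight : R := \sum_(i < m.+1) (a i)%:R / 2 ^+ i.

Lemma pow2_gt0 (i : nat) : 0 < (2 : R) ^+ i.
Proof. exact: exprn_gt0. Qed.

Lemma weight_gt0 : (exists i, a i <> 0%N) -> 0 < weight.
Proof.
move=> [j /eqP aj_neq0]; rewrite /weight (bigD1 j) //=.
apply: ltr_pwDl; first by rewrite divr_gt0 ?pow2_gt0 // ltr0n lt0n.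
by apply: sumr_ge0 => i _; rewrite divr_ge0 // ltW ?pow2_gt0.
Qed.

Lemma proportional_ge0 (c : R) (i : 'I_m.+1) : 0 <= c -> 0 <= proportional c i.
Proof. by move=> c_ge0; rewrite /proportional divr_ge0 // ltW ?pow2_gt0. Qed.

Lemma score_proportional (c : R) : score a (proportional c) = c * weight.
Proof.
rewrite /score /weight mulr_sumr; apply: eq_bigr => i _.
by rewrite /proportional mulrCA mulrA.
Qed.

Lemma cost_proportional (c : R) :
  cost a (proportional c) = c ^+ 2 * weight / 2.
Proof.
rewrite /cost /weight [RHS]mulrC; congr (_ * _); rewrite mulr_sumr.
apply: eq_bigr => i _; rewrite /proportional.
by field; rewrite gt_eqF ?pow2_gt0.
Qed.

Lemma score_mul_le_cost (c : R) (nu : 'I_m.+1 -> R) :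
  score a nu * c <= cost a nu + cost a (proportional c).
Proof.
rewrite /score /cost -mulrDr mulr_suml -big_split /=.
rewrite mulr_sumr; apply: ler_sum => i _; rewrite /proportional.
have half_a_ge0 : 0 <= (a i)%:R / 2 :> R by rewrite divr_ge0 ?ler0n.
have := ler_wpM2l half_a_ge0 (AMGM_weighted (nu i) c (pow2_gt0 i)).
by congr (_ <= _); field; rewrite // gt_eqF ?pow2_gt0.
Qed.

Lemma cost_proportional_sqrt (C0 : R) :
  0 < weight -> 0 <= C0 ->
  cost a (proportional (Num.sqrt (2 * C0 / weight))) = C0.
Proof.
move=> W_gt0 C0_ge0; rewrite cost_proportional sqr_sqrtr; last first.
  by rewrite divr_ge0 ?mulr_ge0 // ltW.
by field; rewrite gt_eqF.
Qed.

End ProportionalAssignment.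

Theorem lemma2 (R : realType) (m : nat) (a : 'I_m.+1 -> nat) (C0 : R) :
  (1 <= m)%N -> (exists i, a i <> 0%N) -> 0 < C0 ->
  exists c : R, 0 < c /\
    let mu := fun i : 'I_m.+1 => c / 2 ^+ i in
    feasible a C0 mu /\
    (forall nu : 'I_m.+1 -> R, feasible a C0 nu -> score a nu <= score a mu).
Proof.
move=> _ /(weight_gt0 R) W_gt0 C0_gt0.
pose c := Num.sqrt (2 * C0 / weight R a).
have c_gt0 : 0 < c by rewrite sqrtr_gt0 divr_gt0 ?mulr_gt0.
have cost_c : cost a (proportional c) = C0.
  by rewrite cost_proportional_sqrt // ltW.
have score_c : score a (proportional c) * c = 2 * C0.
  by rewrite -cost_c score_proportional cost_proportional; field.
exists c; split => //=; split.
  by split; [move=> i; exact: proportional_ge0 (ltW c_gt0) | rewrite cost_c].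
move=> nu [_ cost_nu]; rewrite -(ler_pM2r c_gt0).
apply: le_trans (score_mul_le_cost a c nu) _.
rewrite cost_c -[score _ _]/(score a (proportional c)) score_c; lra.
Qed.
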